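(* Assume $\nu>1/2$ and let $b,\theta>0$ be fixed. For any continuous function $F:\mathbb R\to[0,\infty)$ with $0<\int_{-\infty}^\infty F(x)\,dx<\infty$, as $\delta\to0$, $$\int_{-\pi}^{\pi}a^\delta_{b,\theta}(\lambda)\,F\!\Big(\frac{\lambda}{\delta\theta}\Big)d\lambda\sim\delta\theta\int_{-\infty}^{\infty}F(x)\,dx,\qquad \int_{-\pi}^{\pi}\big[a^\delta_{b,\theta}(\lambda)\big]^2F\!\Big(\frac{\lambda}{\delta\theta}\Big)d\lambda\sim\delta\theta\int_{-\infty}^{\infty}F(x)\,dx.$$
   Context: For $\alpha>0$, $\omega\in\mathbb R$ let $g^*_{\nu,\alpha}(\omega)=C_\nu\alpha^{2\nu}(\alpha^2+\omega^2)^{-(\nu+1/2)}$ with $C_\nu=\Gamma(\nu+\frac12)/(\sqrt\pi\,\Gamma(\nu))$. For $\delta,\theta>0$ and $\lambda\in[-\pi,\pi]$ let $g^\delta_{\nu,\theta}(\lambda)=\sum_{k\in\mathbb Z}g^*_{\nu,\delta\theta}(\lambda+2k\pi)$, and for $b>0$, $a^\delta_{b,\theta}=\dfrac{b\,g^\delta_{\nu,\theta}}{b\,g^\delta_{\nu,\theta}+(2\pi)^{-1}}$. ''$\sim$'' means the ratio tends to $1$. *)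

From Stdlib Require Import Reals Lra ClassicalEpsilon.
Open Scope R_scope.

Definition RInt_is (f : R -> R) (a b v : R) : Prop :=
  exists pr : Riemann_integrable f a b, RiemannInt pr = v.

Definition RInt (f : R -> R) (a b : R) : R :=
  epsilon (inhabits 0) (fun v => RInt_is f a b v).

Definition improper_0_inf (f : R -> R) (l : R) : Prop :=
  forall eps, 0 < eps -> exists m, 0 < m /\ exists M,
    forall a b, 0 < a -> a < m -> M < b ->
      exists v, RInt_is f a b v /\ Rabs (v - l) < eps.

Definition improper_R (f : R -> R) (l : R) : Prop :=
  forall eps, 0 < eps -> exists M,
    forall a b, a < - M -> M < b ->
      exists v, RInt_is f a b v /\ Rabs (v - l) < eps.

Definition Gamma (x : R) : R :=
  epsilon (inhabits 0)
    (fun l => improper_0_inf (fun t => Rpower t (x - 1) * exp (- t)) l).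

Definition zsum (f : Z -> R) : R :=
  epsilon (inhabits 0)
    (fun l => infinite_sum (fun n => f (Z.of_nat n) + f (- (Z.of_nat n + 1))%Z) l).

Definition C_nu (nu : R) : R := Gamma (nu + 1/2) / (sqrt PI * Gamma nu).

Definition gstar (nu alpha omega : R) : R :=
  C_nu nu * Rpower alpha (2 * nu) * Rpower (alpha ^ 2 + omega ^ 2) (- (nu + 1/2)).

Definition gdelta (nu delta theta lambda : R) : R :=
  zsum (fun k => gstar nu (delta * theta) (lambda + 2 * IZR k * PI)).

Definition adelta (nu b delta theta lambda : R) : R :=
  b * gdelta nu delta theta lambda / (b * gdelta nu delta theta lambda + / (2 * PI)).

Definition equiv0 (u v : R -> R) : Prop :=
  forall eps, 0 < eps -> exists eta, 0 < eta /\
    forall delta, 0 < delta -> delta < eta -> Rabs (u delta / v delta - 1) < eps.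

From Stdlib Require Import Reals Lra Lia ClassicalEpsilon FunctionalExtensionality Classical.
Open Scope R_scope.

(* Substituting l = delta theta x turns the integral into
   delta theta int a^delta(delta theta x) F(x) dx over |x| <= pi / (delta theta).
   Since 0 <= a^delta <= 1 the integral is at most delta theta int F; and on every
   fixed window |x| <= M the lattice sum g^delta(delta theta x) is >= c_M / delta,
   so a^delta = b g / (b g + 1/(2 pi)) tends to 1 uniformly there, which gives the
   matching lower bound. *)

Lemma RInt_is_unique f a b v w : RInt_is f a b v -> RInt_is f a b w -> v = w.
Proof. intros [p <-] [q <-]. apply RiemannInt_P5. Qed.

Lemma RInt_eq f a b v : RInt_is f a b v -> RInt f a b = v.
Proof.
  intros H. unfold RInt.
  apply (RInt_is_unique f a b); [|exact H].
  exact (epsilon_spec (inhabits 0) (fun v => RInt_is f a b v) (ex_intro _ v H)).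
Qed.

Lemma RInt_is_cont f a b : a <= b -> (forall x, a <= x <= b -> continuity_pt f x) ->
  exists v, RInt_is f a b v.
Proof. intros Hab Hc. eexists. exists (continuity_implies_RiemannInt Hab Hc). reflexivity. Qed.

Lemma RInt_chasles f a b c v w : RInt_is f a b v -> RInt_is f b c w -> RInt_is f a c (v + w).
Proof. intros [p <-] [q <-]. exists (RiemannInt_P24 p q). symmetry; apply RiemannInt_P26. Qed.

Lemma RInt_le f g a b v w : a <= b -> RInt_is f a b v -> RInt_is g a b w ->
  (forall x, a < x < b -> f x <= g x) -> v <= w.
Proof. intros Hab [p <-] [q <-] H. apply RiemannInt_P19; auto. Qed.

Lemma RInt_const c a b : RInt_is (fun _ => c) a b (c * (b - a)).
Proof. exists (RiemannInt_P14 a b c). apply RiemannInt_P15. Qed.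

Lemma RInt_ext f g a b v : (forall x, f x = g x) -> RInt_is f a b v -> RInt_is g a b v.
Proof. intros H. replace g with f; auto. apply functional_extensionality; auto. Qed.

Lemma RInt_scal f a b k v : RInt_is f a b v -> RInt_is (fun x => k * f x) a b (k * v).
Proof.
  intros [p <-].
  pose proof (RiemannInt_P14 a b 0) as p0.
  assert (q : Riemann_integrable (fun x => fct_cte 0 x + k * f x) a b)
    by (apply RiemannInt_P10; auto).
  apply RInt_ext with (f := fun x => fct_cte 0 x + k * f x); [intros; unfold fct_cte; ring|].
  exists q. rewrite (RiemannInt_P13 p0 p q), RiemannInt_P15. ring.
Qed.

Lemma RInt_nonneg f a b v : a <= b -> RInt_is f a b v -> (forall x, a < x < b -> 0 <= f x) -> 0 <= v.
Proof.
  intros Hab Hv Hf. replace 0 with (0 * (b - a)) by ring.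
  exact (RInt_le _ _ a b _ _ Hab (RInt_const 0 a b) Hv Hf).
Qed.

Lemma RInt_subinterval f a b c d v w : a <= b -> b <= c -> c <= d ->
  (forall x, a <= x <= d -> continuity_pt f x /\ 0 <= f x) ->
  RInt_is f b c w -> RInt_is f a d v -> w <= v.
Proof.
  intros Hab Hbc Hcd Hf Hw Hv.
  destruct (RInt_is_cont f a b Hab) as [u1 Hu1]; [intros; apply Hf; lra|].
  destruct (RInt_is_cont f c d Hcd) as [u3 Hu3]; [intros; apply Hf; lra|].
  rewrite (RInt_is_unique _ _ _ _ _ Hv (RInt_chasles _ _ _ _ _ _ (RInt_chasles _ _ _ _ _ _ Hu1 Hw) Hu3)).
  pose proof (RInt_nonneg f a b u1 Hab Hu1 ltac:(intros; apply Hf; lra)).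
  pose proof (RInt_nonneg f c d u3 Hcd Hu3 ltac:(intros; apply Hf; lra)).
  lra.
Qed.

Lemma RInt_derive f G a b : a <= b -> (forall x, a <= x <= b -> continuity_pt f x) ->
  (forall x, a <= x <= b -> derivable_pt_lim G x (f x)) -> RInt_is f a b (G b - G a).
Proof.
  intros Hab Hc HG.
  assert (A : antiderivative f G a b).
  { split; [|exact Hab]. intros x Hx. exists (exist _ _ (HG x Hx)). reflexivity. }
  exists (continuity_implies_RiemannInt Hab Hc).
  rewrite (RiemannInt_P20 Hab (FTC_P1 Hab Hc)).
  destruct (antiderivative_Ucte _ _ _ _ _ (RiemannInt_P29 Hab Hc) A) as [c Hc'].
  rewrite (Hc' b), (Hc' a); lra.
Qed.

Lemma dlim_ext f g x l : (forall y, f y = g y) -> derivable_pt_lim f x l -> derivable_pt_lim g x l.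
Proof. intros H. replace g with f by (apply functional_extensionality; auto). auto. Qed.

Lemma dlim_scale h x : derivable_pt_lim (fun l => l / h) x (/ h).
Proof.
  apply (dlim_ext (mult_real_fct (/ h) id)); [intros; unfold mult_real_fct, id, Rdiv; ring|].
  replace (/ h) with (/ h * 1) at 2 by ring.
  apply derivable_pt_lim_scal, derivable_pt_lim_id.
Qed.

Lemma cont_rescale F h x : continuity F -> continuity_pt (fun l => F (l / h)) x.
Proof.
  intros HF. apply (continuity_pt_comp (fun l => l / h) F); [|apply HF].
  apply derivable_continuous_pt. exists (/ h). apply dlim_scale.
Qed.

Lemma RInt_rescale F h a b v : 0 < h -> a <= b -> continuity F ->
  RInt_is F (a / h) (b / h) v -> RInt_is (fun l => F (l / h)) a b (h * v).
Proof.
  intros Hh Hab HF Hv.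
  assert (Hab' : a / h <= b / h) by (apply Rmult_le_compat_r; [left; apply Rinv_0_lt_compat|]; lra).
  destruct (RiemannInt_P30 Hab' (fun x _ => HF x)) as [G [HG _]].
  assert (DG : forall x, a / h <= x <= b / h -> derivable_pt_lim G x (F x)).
  { intros x Hx. destruct (HG x Hx) as [pr Hpr]. exact (derive_pt_eq_1 _ _ _ pr (eq_sym Hpr)). }
  rewrite (RInt_is_unique _ _ _ _ _ Hv (RInt_derive F G _ _ Hab' (fun x _ => HF x) DG)).
  replace (h * (G (b / h) - G (a / h))) with (h * G (b / h) - h * G (a / h)) by ring.
  apply (RInt_derive _ (fun l => h * G (l / h))); [exact Hab | intros; apply cont_rescale; exact HF |].
  intros x Hx.
  assert (Hx' : a / h <= x / h <= b / h)
    by (split; apply Rmult_le_compat_r; try (left; apply Rinv_0_lt_compat); lra).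
  apply (dlim_ext (mult_real_fct h (comp G (fun l => l / h)))); [reflexivity|].
  replace (F (x / h)) with (h * (F (x / h) * / h)) by (field; lra).
  apply derivable_pt_lim_scal, derivable_pt_lim_comp; [apply dlim_scale | apply DG; exact Hx'].
Qed.

Section Concentration.

Variable F : R -> R.
Hypothesis F_cont : continuity F.
Hypothesis F_nonneg : forall x, 0 <= F x.

Lemma weighted_upper (G : R -> R) h a b J v : 0 < h -> a <= b ->
  (forall l, a < l < b -> G l <= 1) ->
  RInt_is (fun l => G l * F (l / h)) a b J -> RInt_is F (a / h) (b / h) v -> J <= h * v.
Proof.
  intros Hh Hab HG HJ Hv.
  apply (RInt_le _ _ a b _ _ Hab HJ (RInt_rescale F h a b v Hh Hab F_cont Hv)).
  intros l Hl. pose proof (HG l Hl). pose proof (F_nonneg (l / h)). nra.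
Qed.

Lemma weighted_lower (G : R -> R) h M a b c J v : 0 < h -> 0 <= M ->
  a <= - (h * M) -> h * M <= b ->
  (forall l, a <= l <= b -> continuity_pt (fun l => G l * F (l / h)) l) ->
  (forall l, a <= l <= b -> 0 <= G l) ->
  (forall l, - (h * M) <= l <= h * M -> c <= G l) ->
  RInt_is (fun l => G l * F (l / h)) a b J -> RInt_is F (- M) M v -> h * (c * v) <= J.
Proof.
  intros Hh HM Ha Hb Hcont HG0 HGc HJ Hv.
  set (Psi := fun l => G l * F (l / h)).
  assert (Hpos : forall l, a <= l <= b -> 0 <= Psi l)
    by (intros l Hl; apply Rmult_le_pos; [apply HG0; exact Hl | apply F_nonneg]).
  assert (Hhm : 0 <= h * M) by nra.
  destruct (RInt_is_cont Psi a (- (h * M))) as [J1 HJ1]; [lra | intros; apply Hcont; lra |].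
  destruct (RInt_is_cont Psi (- (h * M)) (h * M)) as [J2 HJ2]; [lra | intros; apply Hcont; lra |].
  destruct (RInt_is_cont Psi (h * M) b) as [J3 HJ3]; [lra | intros; apply Hcont; lra |].
  rewrite (RInt_is_unique _ _ _ _ _ HJ (RInt_chasles _ _ _ _ _ _ (RInt_chasles _ _ _ _ _ _ HJ1 HJ2) HJ3)).
  assert (0 <= J1) by (apply (RInt_nonneg Psi a (- (h * M)) J1 ltac:(lra) HJ1); intros; apply Hpos; lra).
  assert (0 <= J3) by (apply (RInt_nonneg Psi (h * M) b J3 ltac:(lra) HJ3); intros; apply Hpos; lra).
  assert (Hcv : RInt_is (fun x => c * F x) (- (h * M) / h) (h * M / h) (c * v)).
  { replace (- (h * M) / h) with (- M) by (field; lra).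
    replace (h * M / h) with M by (field; lra). apply RInt_scal; exact Hv. }
  assert (h * (c * v) <= J2).
  { assert (Hwin : - (h * M) <= h * M) by lra.
    apply (RInt_le _ _ _ _ _ _ Hwin
      (RInt_rescale _ h _ _ _ Hh Hwin (fun x => continuity_pt_scal F c x (F_cont x)) Hcv) HJ2).
    intros l Hl. unfold Psi, mult_real_fct. pose proof (HGc l ltac:(lra)). pose proof (F_nonneg (l / h)). nra. }
  lra.
Qed.

Lemma weighted_sandwich (G : R -> R) h M IF e J : 0 < h -> 0 < M -> h * M <= PI -> 0 < e <= 1/2 ->
  (forall a b, a <= - M -> M <= b -> exists v, RInt_is F a b v /\ Rabs (v - IF) < e) ->
  (forall l, - PI <= l <= PI -> continuity_pt G l /\ 0 <= G l <= 1) ->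
  (forall l, - (h * M) <= l <= h * M -> 1 - e <= G l) ->
  RInt_is (fun l => G l * F (l / h)) (- PI) PI J ->
  h * ((1 - e) * (IF - e)) <= J <= h * (IF + e).
Proof.
  intros Hh HM HhM He HF HG HGwin HJ.
  pose proof PI_RGT_0 as HPI.
  assert (HPIh : M <= PI / h).
  { apply (Rmult_le_reg_r h); [exact Hh|]. unfold Rdiv; rewrite Rmult_assoc, Rinv_l; nra. }
  assert (HPIh' : - PI / h <= - M) by (unfold Rdiv in *; rewrite Ropp_mult_distr_l_reverse; lra).
  destruct (HF (- M) M ltac:(lra) ltac:(lra)) as [v1 [Hv1 Hv1e]].
  destruct (HF (- PI / h) (PI / h) HPIh' HPIh) as [v2 [Hv2 Hv2e]].
  assert (Hup : J <= h * v2).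
  { apply (weighted_upper G h (- PI) PI J v2 Hh ltac:(lra)); [|exact HJ|exact Hv2].
    intros l Hl. apply HG; lra. }
  assert (Hlo : h * ((1 - e) * v1) <= J).
  { apply (weighted_lower G h M (- PI) PI (1 - e) J v1 Hh ltac:(lra) ltac:(lra) ltac:(lra));
      [| | exact HGwin | exact HJ | exact Hv1].
    - intros l Hl. apply (continuity_pt_mult G (fun l => F (l / h))); [apply HG; exact Hl|].
      apply cont_rescale; exact F_cont.
    - intros l Hl. apply HG; exact Hl. }
  apply Rabs_def2 in Hv1e. apply Rabs_def2 in Hv2e.
  split; [| nra].
  apply Rle_trans with (h * ((1 - e) * v1)); [| exact Hlo].
  apply Rmult_le_compat_l; [lra | apply Rmult_le_compat_l; lra].
Qed.

End Concentration.

Lemma ratio_close J H eps : 0 < H -> H * (1 - eps) < J -> J < H * (1 + eps) -> Rabs (J / H - 1) < eps.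
Proof.
  intros HH Hlo Hhi. apply Rabs_def1.
  - apply (Rmult_lt_reg_r H); auto. unfold Rdiv. rewrite Rmult_minus_distr_r, Rmult_assoc, Rinv_l; lra.
  - apply (Rmult_lt_reg_r H); auto. unfold Rdiv. rewrite Rmult_minus_distr_r, Rmult_assoc, Rinv_l; lra.
Qed.

Lemma equiv0_of_sandwich (J h : R -> R) I : 0 < I -> (forall d, 0 < d -> 0 < h d) ->
  (forall e, 0 < e -> e <= 1/2 -> exists eta, 0 < eta /\ forall d, 0 < d -> d < eta ->
     h d * ((1 - e) * (I - e)) <= J d <= h d * (I + e)) ->
  equiv0 J (fun d => h d * I).
Proof.
  intros HI Hh Hsw eps Heps.
  set (e := Rmin (1/2) (eps * I / (2 * (I + 1)))).
  assert (He : 0 < e) by (apply Rmin_glb_lt; [lra | apply Rdiv_lt_0_compat; nra]).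
  assert (He_small : e * (2 * (I + 1)) <= eps * I).
  { assert (e <= eps * I / (2 * (I + 1))) by apply Rmin_r.
    apply (Rmult_le_compat_r (2 * (I + 1))) in H; [|lra].
    unfold Rdiv in H; rewrite Rmult_assoc, Rinv_l in H; lra. }
  destruct (Hsw e He (Rmin_l _ _)) as [eta [Heta Hd]].
  exists eta; split; [exact Heta|]. intros d Hd0 Hdeta.
  destruct (Hd d Hd0 Hdeta) as [Hlo Hhi]. pose proof (Hh d Hd0) as Hhd.
  apply ratio_close; [nra | |].
  - assert ((1 - e) * (I - e) > I * (1 - eps)) by nra. nra.
  - assert (I + e < I * (1 + eps)) by nra. nra.
Qed.

Definition concentrating_weight (theta : R) (Phi : R -> R -> R) : Prop :=
  (forall d, 0 < d -> forall l, - PI <= l <= PI ->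
     continuity_pt (Phi d) l /\ 0 <= Phi d l <= 1) /\
  (forall M eta, 0 < eta -> exists d0, 0 < d0 /\ forall d, 0 < d -> d < d0 ->
     forall l, - PI <= l <= PI -> - (d * theta * M) <= l <= d * theta * M -> 1 - eta <= Phi d l).

Theorem concentration theta (Phi : R -> R -> R) (F : R -> R) IF :
  0 < theta -> continuity F -> (forall x, 0 <= F x) -> improper_R F IF -> 0 < IF ->
  concentrating_weight theta Phi ->
  equiv0 (fun d => RInt (fun l => Phi d l * F (l / (d * theta))) (- PI) PI) (fun d => d * theta * IF).
Proof.
  intros Htheta HFc HF0 HFint HIF [Hreg Hwin].
  pose proof PI_RGT_0 as HPI.
  apply equiv0_of_sandwich; [exact HIF | intros; nra |]. intros e He He2.
  destruct (HFint e He) as [M0 HM0].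
  set (M := Rabs M0 + 1).
  assert (HM : M0 < M /\ 0 < M)
    by (unfold M; pose proof (Rle_abs M0); pose proof (Rabs_pos M0); lra).
  destruct (Hwin M e He) as [d0 [Hd0 Hd0w]].
  exists (Rmin d0 (PI / (theta * M))). split.
  { apply Rmin_glb_lt; [exact Hd0 | apply Rdiv_lt_0_compat; nra]. }
  intros d Hd Hdlt.
  assert (Hdd0 : d < d0) by (eapply Rlt_le_trans; [exact Hdlt | apply Rmin_l]).
  assert (HhM : d * theta * M < PI).
  { assert (d < PI / (theta * M)) by (eapply Rlt_le_trans; [exact Hdlt | apply Rmin_r]).
    apply (Rmult_lt_compat_r (theta * M)) in H; [|nra].
    unfold Rdiv in H; rewrite Rmult_assoc, Rinv_l in H; nra. }
  destruct (RInt_is_cont (fun l => Phi d l * F (l / (d * theta))) (- PI) PI) as [J HJ].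
  { lra. }
  { intros l Hl. apply (continuity_pt_mult (Phi d) (fun l => F (l / (d * theta)))).
    - apply Hreg; assumption.
    - apply cont_rescale; exact HFc. }
  rewrite (RInt_eq _ _ _ _ HJ).
  apply (weighted_sandwich F HFc HF0 (Phi d) (d * theta) M IF e J); try nra.
  - intros a b Ha Hb. apply HM0; lra.
  - apply Hreg; exact Hd.
  - intros l Hl. apply Hd0w; [exact Hd | exact Hdd0 | nra | exact Hl].
  - exact HJ.
Qed.

(* Squaring preserves concentration, since 1 - eta/2 <= a <= 1 implies 1 - eta <= a^2. *)
Lemma concentrating_weight_sqr theta Phi :
  concentrating_weight theta Phi -> concentrating_weight theta (fun d l => Phi d l ^ 2).
Proof.
  intros [Hreg Hwin]. split.
  - intros d Hd l Hl. destruct (Hreg d Hd l Hl) as [Hc H01]. split; [| split; nra].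
    apply (continuity_pt_locally_ext (fun l => Phi d l * Phi d l) _ 1); [lra | intros; ring |].
    exact (continuity_pt_mult _ _ l Hc Hc).
  - intros M eta Heta. destruct (Hwin M (eta / 2) ltac:(lra)) as [d0 [Hd0 Hd0w]].
    exists d0; split; [exact Hd0|]. intros d Hd Hdd0 l Hl Hlw.
    pose proof (Hd0w d Hd Hdd0 l Hl Hlw). pose proof (proj2 (Hreg d Hd l Hl)). nra.
Qed.

Lemma lub_approx (E : R -> Prop) L eps : is_lub E L -> 0 < eps -> exists y, E y /\ L - eps < y.
Proof.
  intros [_ Hleast] Heps. apply NNPP. intros Hno.
  assert (is_upper_bound E (L - eps)).
  { intros y Hy. apply Rnot_lt_le. intros Hlt. apply Hno. exists y; split; [exact Hy | lra]. }
  pose proof (Hleast _ H). lra.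
Qed.

Lemma improper_0_inf_of_bounded (f : R -> R) A B :
  (forall t, 0 < t -> continuity_pt f t /\ 0 <= f t) ->
  (forall a v, 0 < a <= 1 -> RInt_is f a 1 v -> v <= A) ->
  (forall b v, 1 <= b -> RInt_is f 1 b v -> v <= B) ->
  exists l, improper_0_inf f l.
Proof.
  intros Hf HA HB.
  assert (Hint : forall a b, 0 < a -> a <= b -> exists v, RInt_is f a b v)
    by (intros a b Ha Hab; apply RInt_is_cont; [exact Hab | intros; apply Hf; lra]).
  set (EA := fun y => exists a, 0 < a <= 1 /\ RInt_is f a 1 y).
  set (EB := fun y => exists b, 1 <= b /\ RInt_is f 1 b y).
  destruct (Hint 1 1 ltac:(lra) ltac:(lra)) as [v11 Hv11].
  destruct (completeness EA) as [LA HLA].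
  { exists A. intros y [a [Ha Hy]]. exact (HA a y Ha Hy). }
  { exists v11, 1. split; [lra | exact Hv11]. }
  destruct (completeness EB) as [LB HLB].
  { exists B. intros y [b [Hb Hy]]. exact (HB b y Hb Hy). }
  { exists v11, 1. split; [lra | exact Hv11]. }
  exists (LA + LB). intros eps Heps.
  destruct (lub_approx EA LA (eps / 2) HLA ltac:(lra)) as [va0 [[a0 [Ha0 Hva0]] Hva0']].
  destruct (lub_approx EB LB (eps / 2) HLB ltac:(lra)) as [vb0 [[b0 [Hb0 Hvb0]] Hvb0']].
  exists a0. split; [lra|]. exists b0. intros a b Ha Hab Hb.
  destruct (Hint a 1 Ha ltac:(lra)) as [va Hva].
  destruct (Hint 1 b ltac:(lra) ltac:(lra)) as [vb Hvb].
  exists (va + vb). split; [exact (RInt_chasles _ _ _ _ _ _ Hva Hvb)|].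
  assert (Hpos : forall a' b', 0 < a' -> forall x, a' <= x <= b' -> continuity_pt f x /\ 0 <= f x)
    by (intros; apply Hf; lra).
  pose proof (RInt_subinterval f a a0 1 1 va va0 ltac:(lra) ltac:(lra) ltac:(lra) (Hpos a 1 Ha) Hva0 Hva).
  pose proof (RInt_subinterval f 1 1 b0 b vb vb0 ltac:(lra) ltac:(lra) ltac:(lra) (Hpos 1 b ltac:(lra)) Hvb0 Hvb).
  assert (va <= LA) by (apply (proj1 HLA); exists a; split; [lra | exact Hva]).
  assert (vb <= LB) by (apply (proj1 HLB); exists b; split; [lra | exact Hvb]).
  apply Rabs_def1; lra.
Qed.

Lemma improper_0_inf_pos (f : R -> R) l m : 0 < m ->
  (forall t, 0 < t -> continuity_pt f t /\ 0 <= f t) ->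
  (forall t, 1 <= t <= 2 -> m <= f t) ->
  improper_0_inf f l -> 0 < l.
Proof.
  intros Hm Hf Hlow Hl.
  destruct (Hl (m / 2) ltac:(lra)) as [m0 [Hm0 [M HM]]].
  set (a := Rmin (m0 / 2) 1).
  assert (Ha : 0 < a /\ a < m0 /\ a <= 1)
    by (unfold a; split; [apply Rmin_glb_lt; lra | split; [eapply Rle_lt_trans; [apply Rmin_l | lra] | apply Rmin_r]]).
  set (b := Rmax M 2 + 1).
  assert (Hb : M < b /\ 2 <= b) by (unfold b; pose proof (Rmax_l M 2); pose proof (Rmax_r M 2); lra).
  destruct (HM a b ltac:(lra) ltac:(lra) ltac:(lra)) as [v [Hv Hve]].
  destruct (RInt_is_cont f 1 2) as [u Hu]; [lra | intros; apply Hf; lra |].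
  assert (m * (2 - 1) <= u) by (apply (RInt_le _ _ 1 2 _ _ ltac:(lra) (RInt_const m 1 2) Hu); intros; apply Hlow; lra).
  assert (u <= v).
  { apply (RInt_subinterval f a 1 2 b v u ltac:(lra) ltac:(lra) ltac:(lra)); [|exact Hu|exact Hv].
    intros; apply Hf; lra. }
  apply Rabs_def2 in Hve. lra.
Qed.

Lemma derivable_pt_lim_exp_scal c t : derivable_pt_lim (fun t => exp (c * t)) t (c * exp (c * t)).
Proof.
  apply (dlim_ext (comp exp (mult_real_fct c id))); [reflexivity|].
  assert (Hin : derivable_pt_lim (mult_real_fct c id) t (c * 1))
    by (apply derivable_pt_lim_scal, derivable_pt_lim_id).
  pose proof (derivable_pt_lim_comp _ exp _ _ _ Hin (derivable_pt_lim_exp (c * t))) as D.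
  unfold mult_real_fct, id in D |- *. rewrite Rmult_1_r, Rmult_comm in D. exact D.
Qed.

Lemma exp_le_mono a c : a <= c -> exp a <= exp c.
Proof. intros [H|<-]; [left; apply exp_increasing; exact H | lra]. Qed.

Lemma ln_le_mono a c : 0 < a -> a <= c -> ln a <= ln c.
Proof. intros Ha [H|<-]; [left; apply ln_increasing; lra | lra]. Qed.

Lemma Rpower_1_base y : Rpower 1 y = 1.
Proof. unfold Rpower. rewrite ln_1, Rmult_0_r, exp_0. reflexivity. Qed.

Definition gamma_integrand (x t : R) : R := Rpower t (x - 1) * exp (- t).

Lemma gamma_integrand_reg x t : 0 < t -> continuity_pt (gamma_integrand x) t /\ 0 <= gamma_integrand x t.
Proof.
  intros Ht. unfold gamma_integrand. split.
  - apply (continuity_pt_mult (fun t => Rpower t (x - 1)) (fun t => exp (- t))).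
    + apply derivable_continuous_pt. exists ((x - 1) * Rpower t (x - 2 + 1 - 1)).
      replace (x - 2 + 1 - 1) with (x - 1 - 1) by ring. apply derivable_pt_lim_power; exact Ht.
    + apply derivable_continuous_pt. exists (-1 * exp (-1 * t)).
      apply (dlim_ext (fun t => exp (-1 * t))); [intros; f_equal; ring | apply derivable_pt_lim_exp_scal].
  - left. unfold Rpower. apply Rmult_lt_0_compat; apply exp_pos.
Qed.

(* Near 0: the integrand is at most t^(x-1), whose integral over [a, 1] is at most 1/x. *)
Lemma gamma_integral_head x a v : 0 < x -> 0 < a <= 1 -> RInt_is (gamma_integrand x) a 1 v -> v <= / x.
Proof.
  intros Hx Ha Hv.
  assert (Hpow : RInt_is (fun t => Rpower t (x - 1)) a 1 (Rpower 1 x / x - Rpower a x / x)).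
  { apply (RInt_derive _ (fun t => Rpower t x / x)); [lra | |].
    - intros t Ht. apply derivable_continuous_pt. exists ((x - 1) * Rpower t (x - 1 - 1)).
      apply derivable_pt_lim_power; lra.
    - intros t Ht.
      apply (dlim_ext (mult_real_fct (/ x) (fun t => Rpower t x))); [intros; unfold mult_real_fct, Rdiv; ring|].
      replace (Rpower t (x - 1)) with (/ x * (x * Rpower t (x - 1))) by (field; lra).
      apply derivable_pt_lim_scal, derivable_pt_lim_power; lra. }
  apply Rle_trans with (Rpower 1 x / x - Rpower a x / x).
  - apply (RInt_le _ _ a 1 _ _ ltac:(lra) Hv Hpow). intros t Ht. unfold gamma_integrand.
    assert (exp (- t) <= 1) by (rewrite <- exp_0; apply exp_le_mono; lra).
    assert (0 < Rpower t (x - 1)) by (unfold Rpower; apply exp_pos). nra.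
  - rewrite Rpower_1_base. assert (0 < Rpower a x) by (unfold Rpower; apply exp_pos).
    assert (0 < / x) by (apply Rinv_0_lt_compat; lra). unfold Rdiv. nra.
Qed.

Definition gamma_tail_const (x : R) : R := let q := Rabs (x - 1) + 1 in exp (q * ln (2 * q) - q).

Lemma gamma_integrand_tail x t : 1 <= t -> gamma_integrand x t <= gamma_tail_const x * exp (-(1/2) * t).
Proof.
  intros Ht. unfold gamma_integrand, gamma_tail_const, Rpower. set (q := Rabs (x - 1) + 1).
  assert (Hq : 1 <= q) by (unfold q; pose proof (Rabs_pos (x - 1)); lra).
  rewrite <- !exp_plus. apply exp_le_mono.
  assert (Hlt : 0 <= ln t) by (rewrite <- ln_1; apply ln_le_mono; lra).
  assert (H1 : (x - 1) * ln t <= q * ln t)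
    by (apply Rmult_le_compat_r; [exact Hlt | unfold q; pose proof (Rle_abs (x - 1)); lra]).
  (* ln u <= u - 1 at u = t / (2q) *)
  assert (H2 : ln (t / (2 * q)) <= t / (2 * q) - 1).
  { pose proof (exp_ineq1_le (ln (t / (2 * q)))). rewrite exp_ln in H by (apply Rdiv_lt_0_compat; lra). lra. }
  unfold Rdiv in H2. rewrite ln_mult, ln_Rinv in H2 by (try apply Rinv_0_lt_compat; lra).
  assert (H3 : q * ln t <= q * ln (2 * q) + q * (t * / (2 * q)) - q) by nra.
  replace (q * (t * / (2 * q))) with (t / 2) in H3 by (field; lra).
  lra.
Qed.

Lemma gamma_integral_tail x b v : 1 <= b -> RInt_is (gamma_integrand x) 1 b v -> v <= 2 * gamma_tail_const x.
Proof.
  intros Hb Hv. set (K := gamma_tail_const x).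
  assert (HK : 0 < K) by (unfold K, gamma_tail_const; apply exp_pos).
  assert (Hexp : RInt_is (fun t => exp (-(1/2) * t)) 1 b
                   ((-2) * exp (-(1/2) * b) - (-2) * exp (-(1/2) * 1))).
  { apply (RInt_derive _ (fun t => (-2) * exp (-(1/2) * t))); [lra | |].
    - intros t _. apply derivable_continuous_pt. eexists. apply derivable_pt_lim_exp_scal.
    - intros t _. replace (exp (-(1/2) * t)) with (-2 * (-(1/2) * exp (-(1/2) * t))) by field.
      apply (derivable_pt_lim_scal (fun t => exp (-(1/2) * t))), derivable_pt_lim_exp_scal. }
  apply Rle_trans with (K * ((-2) * exp (-(1/2) * b) - (-2) * exp (-(1/2) * 1))).
  - apply (RInt_le _ _ 1 b _ _ Hb Hv (RInt_scal _ _ _ K _ Hexp)).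
    intros t Ht. apply gamma_integrand_tail; lra.
  - assert (exp (-(1/2) * 1) <= exp 0) by (apply exp_le_mono; lra). rewrite exp_0 in H.
    pose proof (exp_pos (-(1/2) * b)). nra.
Qed.

Lemma gamma_integrand_lower x t : 1 <= t <= 2 -> exp (- Rabs (x - 1) * ln 2 - 2) <= gamma_integrand x t.
Proof.
  intros Ht. unfold gamma_integrand, Rpower. rewrite <- exp_plus. apply exp_le_mono.
  assert (0 <= ln t) by (rewrite <- ln_1; apply ln_le_mono; lra).
  assert (ln t <= ln 2) by (apply ln_le_mono; lra).
  assert (- Rabs (x - 1) * ln 2 <= (x - 1) * ln t).
  { pose proof (Rle_abs (x - 1)). pose proof (Rle_abs (- (x - 1))). rewrite Rabs_Ropp in *.
    pose proof (Rabs_pos (x - 1)). nra. }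
  lra.
Qed.

Lemma Gamma_pos x : 0 < x -> 0 < Gamma x.
Proof.
  intros Hx.
  destruct (improper_0_inf_of_bounded (gamma_integrand x) (/ x) (2 * gamma_tail_const x)) as [l Hl].
  - apply gamma_integrand_reg.
  - intros a v Ha Hv. exact (gamma_integral_head x a v Hx Ha Hv).
  - intros b v Hb Hv. exact (gamma_integral_tail x b v Hb Hv).
  - apply (improper_0_inf_pos (gamma_integrand x) _ (exp (- Rabs (x - 1) * ln 2 - 2))).
    + apply exp_pos.
    + apply gamma_integrand_reg.
    + apply gamma_integrand_lower.
    + exact (epsilon_spec (inhabits 0) (improper_0_inf (gamma_integrand x)) (ex_intro _ l Hl)).
Qed.

Lemma C_nu_pos nu : 0 < nu -> 0 < C_nu nu.
Proof.
  intros Hnu. unfold C_nu. apply Rdiv_lt_0_compat; [apply Gamma_pos; lra|].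
  apply Rmult_lt_0_compat; [apply sqrt_lt_R0, PI_RGT_0 | apply Gamma_pos; lra].
Qed.

Lemma cv_le_bound (u : nat -> R) l c : Un_cv u l -> (forall n, u n <= c) -> l <= c.
Proof.
  intros Hu Hc. apply (Rle_cv_lim Hc Hu).
  intros eps Heps. exists 0%nat. intros n _. unfold Rdist. rewrite Rminus_diag, Rabs_R0. exact Heps.
Qed.

Definition gstar_amp (nu al : R) : R := C_nu nu * Rpower al (2 * nu).

Section Periodization.

Variable nu : R.
Hypothesis nu_ge : 1/2 <= nu.

Let C_nu_gt0 : 0 < C_nu nu.
Proof. apply C_nu_pos; lra. Qed.

Let amp_pos al : 0 < gstar_amp nu al.
Proof. unfold gstar_amp. apply Rmult_lt_0_compat; [exact C_nu_gt0 | unfold Rpower; apply exp_pos]. Qed.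

Lemma gstar_pos al w : 0 < gstar nu al w.
Proof. unfold gstar. apply Rmult_lt_0_compat; [apply amp_pos | unfold Rpower; apply exp_pos]. Qed.

(* Since nu + 1/2 >= 1, g*_{nu, al}(w) decays at least like amp / w^2. *)
Lemma gstar_le_inv_sqr al w : 1 <= w ^ 2 -> gstar nu al w <= gstar_amp nu al / w ^ 2.
Proof.
  intros Hw. unfold gstar, Rdiv. fold (gstar_amp nu al).
  apply Rmult_le_compat_l; [left; apply amp_pos|].
  apply Rle_trans with (Rpower (al ^ 2 + w ^ 2) (Ropp 1)); [apply Rle_Rpower; nra|].
  rewrite Rpower_Ropp, Rpower_1 by nra.
  apply Rinv_le_contravar; nra.
Qed.

Lemma gstar_window_lower h M l : 0 < h -> Rabs l <= h * M ->
  C_nu nu * Rpower (1 + M ^ 2) (- (nu + 1/2)) / h <= gstar nu h l.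
Proof.
  intros Hh Hl. unfold gstar.
  set (p := nu + 1/2).
  assert (Hl2 : l ^ 2 <= h ^ 2 * M ^ 2)
    by (rewrite <- pow2_abs; pose proof (Rabs_pos l); nra).
  assert (Hh2 : 0 < h ^ 2) by (apply pow_lt; exact Hh).
  assert (Hmono : Rpower (h ^ 2 * (1 + M ^ 2)) (- p) <= Rpower (h ^ 2 + l ^ 2) (- p)).
  { rewrite !Rpower_Ropp. apply Rinv_le_contravar; [unfold Rpower; apply exp_pos|].
    apply Rle_Rpower_l; [unfold p; lra | split; [pose proof (pow2_ge_0 l); lra | nra]]. }
  assert (Hsplit : Rpower (h ^ 2 * (1 + M ^ 2)) (- p) = Rpower h (2 * - p) * Rpower (1 + M ^ 2) (- p)).
  { rewrite <- Rpower_mult_distr by (pose proof (pow2_ge_0 M); lra).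
    rewrite <- (Rpower_pow 2 h Hh), Rpower_mult. f_equal; f_equal; simpl; ring. }
  assert (Hcancel : Rpower h (2 * nu) * Rpower h (2 * - p) = / h).
  { rewrite <- Rpower_plus. replace (2 * nu + 2 * - p) with (Ropp 1) by (unfold p; field).
    rewrite Rpower_Ropp, Rpower_1; [reflexivity | exact Hh]. }
  apply Rle_trans with (C_nu nu * Rpower h (2 * nu) * Rpower (h ^ 2 * (1 + M ^ 2)) (- p)).
  - right. rewrite Hsplit, <- Rmult_assoc, (Rmult_assoc (C_nu nu)), Hcancel.
    unfold Rdiv. ring.
  - apply Rmult_le_compat_l; [left; apply amp_pos | exact Hmono].
Qed.

Lemma gstar_shift_cont al c y : 0 < al -> continuity_pt (fun y => gstar nu al (y + c)) y.
Proof.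
  intros Hal. unfold gstar.
  apply (continuity_pt_scal (fun y => Rpower (al ^ 2 + (y + c) ^ 2) (- (nu + 1/2)))).
  apply (continuity_pt_comp (fun y => al ^ 2 + (y + c) ^ 2) (fun z => Rpower z (- (nu + 1/2)))).
  - apply derivable_continuous_pt. reg.
  - apply derivable_continuous_pt. eexists. apply derivable_pt_lim_power.
    pose proof (pow2_ge_0 (y + c)). pose proof (pow_lt al 2 Hal). lra.
Qed.

Definition pair_term (al y : R) (n : nat) : R :=
  gstar nu al (y + 2 * IZR (Z.of_nat n) * PI) + gstar nu al (y + 2 * IZR (- (Z.of_nat n + 1)) * PI).

Definition partial_sum (al y : R) (N : nat) : R := sum_f_R0 (pair_term al y) N.

Lemma pair_term_pos al y n : 0 < pair_term al y n.
Proof. unfold pair_term. pose proof (gstar_pos al (y + 2 * IZR (Z.of_nat n) * PI)).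
  pose proof (gstar_pos al (y + 2 * IZR (- (Z.of_nat n + 1)) * PI)). lra. Qed.

(* For |y| < 2 pi and n >= 2 both translates are at distance >= sqrt(n(n-1)) from 0,
   so the pair is bounded by the telescoping term 2 amp (1/(n-1) - 1/n). *)
Lemma pair_term_bound al y n : Rabs y < 2 * PI -> (2 <= n)%nat ->
  pair_term al y n <= 2 * gstar_amp nu al * (/ (INR n - 1) - / INR n).
Proof.
  intros Hy Hn. unfold pair_term.
  rewrite opp_IZR, plus_IZR, <- INR_IZR_INZ.
  set (x := INR n).
  assert (Hx : 2 <= x) by (unfold x; replace 2 with (INR 2) by (simpl; ring); apply le_INR; exact Hn).
  pose proof (PI2_1) as HPI. apply Rabs_def2 in Hy.
  replace (/ (x - 1) - / x) with (/ (x * (x - 1))) by (field; lra).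
  assert (Hfar : forall w, x * (x - 1) <= w ^ 2 -> gstar nu al w <= gstar_amp nu al * / (x * (x - 1))).
  { intros w Hw. apply Rle_trans with (gstar_amp nu al / w ^ 2); [apply gstar_le_inv_sqr; nra|].
    unfold Rdiv. apply Rmult_le_compat_l; [left; apply amp_pos | apply Rinv_le_contravar; nra]. }
  assert (x * (x - 1) <= (y + 2 * x * PI) ^ 2)
    by (assert (4 * (x - 1) <= y + 2 * x * PI) by nra; nra).
  assert (x * (x - 1) <= (y + 2 * - (x + 1) * PI) ^ 2)
    by (assert (y + 2 * - (x + 1) * PI <= - (4 * x)) by nra; nra).
  pose proof (Hfar _ H). pose proof (Hfar _ H0). lra.
Qed.

Lemma partial_sum_tail al y N k : Rabs y < 2 * PI -> (1 <= N)%nat ->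
  0 <= partial_sum al y (N + k) - partial_sum al y N <= 2 * gstar_amp nu al * (/ INR N - / INR (N + k)).
Proof.
  intros Hy HN. induction k as [|k IH].
  - rewrite Nat.add_0_r. lra.
  - rewrite Nat.add_succ_r. unfold partial_sum in *. rewrite tech5.
    pose proof (pair_term_pos al y (S (N + k))).
    pose proof (pair_term_bound al y (S (N + k)) Hy ltac:(lia)).
    rewrite S_INR in *. replace (INR (N + k) + 1 - 1) with (INR (N + k)) in H0 by ring.
    lra.
Qed.


Lemma partial_sum_growing al y : Un_growing (partial_sum al y).
Proof. intros n. unfold partial_sum. rewrite tech5. pose proof (pair_term_pos al y (S n)). lra. Qed.

Lemma gdelta_sandwich d theta y N : Rabs y < 2 * PI -> (1 <= N)%nat ->
  partial_sum (d * theta) y N <= gdelta nu d theta y <=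
  partial_sum (d * theta) y N + 2 * gstar_amp nu (d * theta) * / INR N.
Proof.
  intros Hy HN. set (al := d * theta). set (u := partial_sum al y).
  assert (Hgrow : Un_growing u) by apply partial_sum_growing.
  assert (Hup : forall m, u m <= u N + 2 * gstar_amp nu al * / INR N).
  { intros m. pose proof (amp_pos al). pose proof (Rinv_0_lt_compat (INR N) (lt_0_INR N ltac:(lia))).
    destruct (Nat.le_gt_cases N m) as [Hm | Hm].
    - replace m with (N + (m - N))%nat by lia.
      pose proof (partial_sum_tail al y N (m - N) Hy HN).
      pose proof (Rinv_0_lt_compat (INR (N + (m - N))) (lt_0_INR (N + (m - N)) ltac:(lia))). unfold u. nra.
    - assert (HmN : (N >= m)%nat) by lia; pose proof (growing_prop u N m Hgrow HmN). nra. }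
  destruct (growing_cv u Hgrow) as [l Hl].
  { exists (u N + 2 * gstar_amp nu al * / INR N). intros x [m ->]. apply Hup. }
  assert (Hg : gdelta nu d theta y = l).
  { unfold gdelta, zsum. apply (uniqueness_sum (pair_term al y)); [|exact Hl].
    exact (epsilon_spec (inhabits 0) (fun l => infinite_sum (pair_term al y) l) (ex_intro _ l Hl)). }
  rewrite Hg. split; [exact (growing_ineq u l Hgrow Hl N) | exact (cv_le_bound u l _ Hl Hup)].
Qed.

Lemma gdelta_ge_gstar d theta y : Rabs y < 2 * PI -> gstar nu (d * theta) y <= gdelta nu d theta y.
Proof.
  intros Hy. apply Rle_trans with (partial_sum (d * theta) y 1); [|apply gdelta_sandwich; auto].
  unfold partial_sum. simpl sum_f_R0. unfold pair_term at 1. simpl Z.of_nat.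
  replace (y + 2 * IZR 0 * PI) with y by ring.
  pose proof (pair_term_pos (d * theta) y 1).
  pose proof (gstar_pos (d * theta) (y + 2 * IZR (- (0 + 1)) * PI)). lra.
Qed.

(* The partial sums converge uniformly on |y| < 2 pi, so g^delta is continuous there. *)
Lemma gdelta_cont d theta y : 0 < d * theta -> Rabs y < 2 * PI -> continuity_pt (gdelta nu d theta) y.
Proof.
  intros Hal Hy.
  assert (Hr : 0 < 2 * PI) by (pose proof PI_RGT_0; lra).
  apply (CVU_continuity (fun N y => partial_sum (d * theta) y N) _ 0 (mkposreal _ Hr));
    [| | unfold Boule; simpl; rewrite Rminus_0_r; exact Hy].
  - intros eps Heps. pose proof (amp_pos (d * theta)). set (A := gstar_amp nu (d * theta)) in *.
    destruct (archimed_cor1 (eps / (2 * A))) as [N [HN1 HN2]]; [apply Rdiv_lt_0_compat; lra|].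
    exists N. intros n z Hn Hz. unfold Boule in Hz; simpl in Hz. rewrite Rminus_0_r in Hz.
    destruct (gdelta_sandwich d theta z n Hz ltac:(lia)) as [H1 H2]. fold A in H2.
    assert (/ INR n <= / INR N) by (apply Rinv_le_contravar; [apply lt_0_INR; lia | apply le_INR; exact Hn]).
    assert (2 * A * / INR N < eps).
    { apply (Rmult_lt_compat_l (2 * A)) in HN1; [|lra].
      replace (2 * A * (eps / (2 * A))) with eps in HN1 by (field; lra). exact HN1. }
    apply Rabs_def1; nra.
  - intros n z _. induction n as [|n IH]; unfold partial_sum in *; simpl sum_f_R0.
    + apply continuity_pt_plus; apply gstar_shift_cont; exact Hal.
    + apply continuity_pt_plus; [exact IH | apply continuity_pt_plus; apply gstar_shift_cont; exact Hal].
Qed.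

End Periodization.

Lemma ratio_unit_bounds G c : 0 <= G -> 0 < c -> 0 <= G / (G + c) <= 1.
Proof.
  intros HG Hc. split.
  - unfold Rdiv. apply Rmult_le_pos; [lra | left; apply Rinv_0_lt_compat; lra].
  - apply (Rmult_le_reg_r (G + c)); [lra|]. unfold Rdiv. rewrite Rmult_assoc, Rinv_l; lra.
Qed.

Lemma ratio_near_one G c eta : 0 < G -> 0 < c -> c <= eta * G -> 1 - eta <= G / (G + c).
Proof.
  intros HG Hc Hce. replace (G / (G + c)) with (1 - c / (G + c)) by (field; lra).
  assert (c / (G + c) <= eta); [|lra].
  apply (Rmult_le_reg_r (G + c)); [lra|]. unfold Rdiv. rewrite Rmult_assoc, Rinv_l; nra.
Qed.

Lemma adelta_reg nu b d theta l : 1/2 <= nu -> 0 < b -> 0 < d * theta -> - PI <= l <= PI ->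
  continuity_pt (adelta nu b d theta) l /\ 0 <= adelta nu b d theta l <= 1.
Proof.
  intros Hnu Hb Hh Hl.
  assert (Hy : Rabs l < 2 * PI) by (pose proof PI_RGT_0; apply Rabs_def1; lra).
  assert (Hc : 0 < / (2 * PI)) by (apply Rinv_0_lt_compat; pose proof PI_RGT_0; lra).
  assert (Hg : 0 < gdelta nu d theta l)
    by (eapply Rlt_le_trans; [apply gstar_pos, Hnu | apply gdelta_ge_gstar; assumption]).
  split; [|apply ratio_unit_bounds; nra].
  assert (Cbg : continuity_pt (fun y => b * gdelta nu d theta y) l)
    by exact (continuity_pt_scal _ b l (gdelta_cont nu Hnu d theta l Hh Hy)).
  apply (continuity_pt_div _ _ l Cbg); [|cbv beta; nra].
  exact (continuity_pt_plus _ (fct_cte (/ (2 * PI))) l Cbg (continuity_pt_const (fct_cte (/ (2 * PI))) l (fun _ _ => eq_refl))).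
Qed.

(* On the window |l| <= d theta M, g^delta is of order 1 / delta, hence a^delta -> 1 uniformly. *)
Lemma adelta_window nu b theta M eta : 1/2 <= nu -> 0 < b -> 0 < theta -> 0 < eta ->
  exists d0, 0 < d0 /\ forall d, 0 < d -> d < d0 -> forall l, - PI <= l <= PI ->
    - (d * theta * M) <= l <= d * theta * M -> 1 - eta <= adelta nu b d theta l.
Proof.
  intros Hnu Hb Htheta Heta.
  set (K := C_nu nu * Rpower (1 + Rabs M ^ 2) (- (nu + 1/2))).
  assert (HK : 0 < K) by (apply Rmult_lt_0_compat; [apply C_nu_pos; lra | unfold Rpower; apply exp_pos]).
  set (c := / (2 * PI)). assert (Hc : 0 < c) by (apply Rinv_0_lt_compat; pose proof PI_RGT_0; lra).
  exists (eta * b * K / (c * theta)). split; [apply Rdiv_lt_0_compat; apply Rmult_lt_0_compat; nra|].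
  intros d Hd Hdd0 l Hl Hlw.
  set (h := d * theta). assert (Hh : 0 < h) by (unfold h; nra).
  assert (Hlh : Rabs l <= h * Rabs M).
  { pose proof (Rle_abs M). pose proof (Rle_abs (- M)). rewrite Rabs_Ropp in *.
    apply Rabs_le. unfold h in *. split; nra. }
  assert (Hy : Rabs l < 2 * PI) by (pose proof PI_RGT_0; apply Rabs_def1; lra).
  assert (Hg : K / h <= gdelta nu d theta l)
    by (apply Rle_trans with (gstar nu h l);
        [exact (gstar_window_lower nu Hnu h (Rabs M) l Hh Hlh) | exact (gdelta_ge_gstar nu Hnu d theta l Hy)]).
  assert (Hch : c * h < eta * b * K).
  { apply (Rmult_lt_compat_r (c * theta)) in Hdd0; [|nra].
    unfold Rdiv in Hdd0. rewrite Rmult_assoc, Rinv_l in Hdd0; [unfold h; nra | nra]. }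
  replace (eta * b * K) with (eta * (b * (K / h)) * h) in Hch by (field; lra).
  assert (HKh : 0 < K / h) by (apply Rdiv_lt_0_compat; assumption).
  unfold adelta. fold c. apply ratio_near_one; [nra | exact Hc |].
  apply Rmult_le_reg_r with h; [exact Hh|].
  assert (eta * (b * (K / h)) * h <= eta * (b * gdelta nu d theta l) * h)
    by (apply Rmult_le_compat_r; [lra | apply Rmult_le_compat_l; [lra | apply Rmult_le_compat_l; lra]]).
  lra.
Qed.

Lemma adelta_concentrating nu b theta : 1/2 <= nu -> 0 < b -> 0 < theta ->
  concentrating_weight theta (fun d l => adelta nu b d theta l).
Proof.
  intros Hnu Hb Htheta. split.
  - intros d Hd l Hl. apply adelta_reg; [exact Hnu | exact Hb | nra | exact Hl].
  - intros M eta Heta. apply adelta_window; assumption.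
Qed.

Theorem lemma5p3 (nu b theta : R) (F : R -> R) (IF : R)
  (Hnu : 1/2 < nu) (Hb : 0 < b) (Htheta : 0 < theta)
  (HFc : continuity F) (HFpos : forall x, 0 <= F x)
  (HFint : improper_R F IF) (HIF : 0 < IF) :
  equiv0
    (fun delta => RInt (fun lam => adelta nu b delta theta lam * F (lam / (delta * theta))) (- PI) PI)
    (fun delta => delta * theta * IF)
  /\
  equiv0
    (fun delta => RInt (fun lam => (adelta nu b delta theta lam) ^ 2 * F (lam / (delta * theta))) (- PI) PI)
    (fun delta => delta * theta * IF).
Proof.
  assert (Ha : concentrating_weight theta (fun d l => adelta nu b d theta l))
    by (apply adelta_concentrating; lra).
  split.
  - exact (concentration theta _ F IF Htheta HFc HFpos HFint HIF Ha).
  - exact (concentration theta _ F IF Htheta HFc HFpos HFint HIF (concentrating_weight_sqr theta _ Ha)).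
Qed.
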